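(* Let $G=(V,E)$ be an undirected graph with capacities $c\colon E\to\mathbb{Z}_{>0}$ and lower bounds $\ell\colon E\to\mathbb{Z}_{\ge0}$ with $\ell(e)\le c(e)$. Let $G^2$ be the multigraph obtained by replacing each edge $e=uv$ by one ''heavy'' edge $uv$ of weight $(c(e)+\ell(e))/2$ and $c(e)-\ell(e)$ ''light'' edges $uv$ of weight $1/2$. Then there exist an orientation of $G$ and an integer circulation $f$ on the resulting directed graph with $\ell(a)\le f(a)\le c(a)$ for every arc $a$ if and only if $G^2$ has an orientation in which, for every vertex, the total weight of incoming edges equals the total weight of outgoing edges.
   Context: A circulation on a directed graph is a function $f$ on arcs with nonnegative values such that at every vertex the total inflow equals the total outflow. An orientation chooses a direction for each edge (of a multigraph, each parallel edge separately). *)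

From mathcomp Require Import all_boot all_order all_algebra.
Set Implicit Arguments. Unset Strict Implicit. Unset Printing Implicit Defensive.
Import Order.TTheory GRing.Theory Num.Theory.

Section Orient.
Variables (V X : finType) (end1 end2 : X -> V) (o : X -> bool).
Definition ohead (x : X) : V := if o x then end2 x else end1 x.
Definition otail (x : X) : V := if o x then end1 x else end2 x.
End Orient.

Definition is_circulation (V X : finType) (end1 end2 : X -> V) (o : X -> bool)
  (f : X -> nat) : Prop :=
  forall v : V,
    \sum_(x | ohead end1 end2 o x == v) f x = \sum_(x | otail end1 end2 o x == v) f x.

Definition balanced_orientation (V X : finType) (end1 end2 : X -> V)
  (w : X -> rat) (o : X -> bool) : Prop :=
  forall v : V,
    (\sum_(x | ohead end1 end2 o x == v) w x = \sum_(x | otail end1 end2 o x == v) w x)%R.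

(* The multigraph G^2: edges are pairs (e, None) = heavy copy of e, and
   (e, Some i), i < c e - l e, the light copies of e. *)
Definition G2edge (E : finType) (c l : E -> nat) : finType :=
  {e : E & option 'I_(c e - l e)}.

Definition G2end (V E : finType) (c l : E -> nat) (en : E -> V)
  (a : G2edge c l) : V := en (tag a).

Definition G2weight (E : finType) (c l : E -> nat) (a : G2edge c l) : rat :=
  match tagged a with
  | None => (((c (tag a))%:R + (l (tag a))%:R) / 2)%R
  | Some _ => (1 / 2)%R
  end.

From Pilot Require Import Defs.
From mathcomp Require Import all_boot all_order all_algebra.
From mathcomp Require Import ring.
Import GRing.Theory Num.Theory.
Set Implicit Arguments. Unset Strict Implicit. Unset Printing Implicit Defensive.

(* Both sides say that some signed flow d : E -> rat has zero net inflow at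
   every vertex.  For an orientation o and a circulation f, d e = +-f e.  For an
   orientation of G^2, let s = +-1 record the direction of the heavy copy of e
   and k the number of light copies pointing the same way; the copies of e
   then carry s ((c e + l e)/2 + (k - (c e - l e - k))/2) = s (l e + k), and
   l e + k ranges exactly over [l e, c e] as k ranges over [0, c e - l e]. *)

Local Open Scope ring_scope.

Lemma card_ord_lt (n k : nat) : (k <= n)%N -> #|[pred i : 'I_n | (i < k)%N]| = k.
Proof.
move=> le_kn; rewrite -sum1_card.
rewrite (eq_bigl (fun i : 'I_n => (i < k)%N)) //.
by rewrite -(big_ord_widen _ (fun=> 1%N) le_kn) sum1_card card_ord.
Qed.

Lemma big_option (R : Type) (idx : R) (op : Monoid.com_law idx) (T : finType)
    (F : option T -> R) :
  \big[op/idx]_y F y = op (F None) (\big[op/idx]_i F (Some i)).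
Proof.
rewrite (bigD1 None) //=; congr (op _ _).
rewrite (reindex_omap Some id) => [|[]//].
by apply: eq_bigl => i; rewrite eqxx.
Qed.

Definition orient_sign (b : bool) : rat := if b then 1 else -1.

Lemma orient_sign_aligned (a b : bool) :
  orient_sign a = orient_sign b * (2 * (a == b)%:R - 1).
Proof. by case: a; case: b; rewrite /orient_sign /=; ring. Qed.

Section NetInflow.
Variables (V X : finType) (end1 end2 : X -> V).

Definition net_inflow (d : X -> rat) (v : V) : rat :=
  \sum_x ((end2 x == v)%:R - (end1 x == v)%:R) * d x.

Lemma eq_net_inflow (d1 d2 : X -> rat) : d1 =1 d2 -> net_inflow d1 =1 net_inflow d2.
Proof. by move=> eq_d v; apply: eq_bigr => x _; rewrite eq_d. Qed.

Lemma ohead_otail_indicator (o : X -> bool) (x : X) (v : V) :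
  (Defs.ohead end1 end2 o x == v)%:R - (otail end1 end2 o x == v)%:R =
  orient_sign (o x) * ((end2 x == v)%:R - (end1 x == v)%:R) :> rat.
Proof. by rewrite /Defs.ohead /otail /orient_sign; case: (o x); ring. Qed.

Lemma balanced_orientationE (w : X -> rat) (o : X -> bool) :
  balanced_orientation end1 end2 w o <->
  forall v, net_inflow (fun x => orient_sign (o x) * w x) v = 0.
Proof.
have net_inflowE v : net_inflow (fun x => orient_sign (o x) * w x) v =
    \sum_(x | Defs.ohead end1 end2 o x == v) w x - \sum_(x | otail end1 end2 o x == v) w x.
  rewrite !(big_mkcond (fun x => _ == v)) -sumrB; apply: eq_bigr => x _.
  rewrite mulrA [_ * orient_sign _]mulrC -ohead_otail_indicator.
  by case: (Defs.ohead _ _ _ x == v); case: (otail _ _ _ x == v); rewrite /=; ring.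
split=> bal v; first by rewrite net_inflowE bal subrr.
by apply/eqP; rewrite -subr_eq0 -net_inflowE bal.
Qed.

Lemma is_circulation_balanced (o : X -> bool) (f : X -> nat) :
  is_circulation end1 end2 o f <-> balanced_orientation end1 end2 (fun x => (f x)%:R) o.
Proof.
split=> circ v; first by rewrite -!natr_sum circ.
by apply/eqP; rewrite -(eqr_nat rat) !natr_sum circ.
Qed.

End NetInflow.

Lemma net_inflow_sigma (V E : finType) (T : E -> finType) (end1 end2 : E -> V)
    (d : {e : E & T e} -> rat) (v : V) :
  net_inflow (fun a => end1 (tag a)) (fun a => end2 (tag a)) d v =
  net_inflow end1 end2 (fun e => \sum_y d (existT T e y)) v.
Proof.
rewrite /net_inflow; under [RHS]eq_bigr do rewrite mulr_sumr.
by rewrite (sig_big_dep xpredT (fun _ _ => true)); apply: eq_big => [[]|[]].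
Qed.

Section SplitGraph.
Variables (E : finType) (c l : E -> nat).
Hypothesis l_le_c : forall e, (l e <= c e)%N.

Definition heavy (e : E) : G2edge c l := existT _ e None.
Definition light (e : E) (i : 'I_(c e - l e)) : G2edge c l := existT _ e (Some i).
Arguments light : clear implicits.

Definition aligned_light (o2 : G2edge c l -> bool) (e : E) : nat :=
  #|[pred i : 'I_(c e - l e) | o2 (light e i) == o2 (heavy e)]|.

Lemma aligned_light_le (o2 : G2edge c l -> bool) (e : E) :
  (aligned_light o2 e <= c e - l e)%N.
Proof. by rewrite -[X in (_ <= X)%N]card_ord max_card. Qed.

Lemma G2weight_signed_sum (o2 : G2edge c l -> bool) (e : E) :
  \sum_(y : option 'I_(c e - l e))
    orient_sign (o2 (existT _ e y)) * G2weight (existT _ e y : G2edge c l) =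
  orient_sign (o2 (heavy e)) * (l e + aligned_light o2 e)%:R.
Proof.
rewrite big_option /G2weight /= -/(heavy e).
set b := o2 (heavy e).
have count_aligned : \sum_i ((o2 (light e i) == b)%:R : rat) = (aligned_light o2 e)%:R.
  rewrite /aligned_light -sum1_card natr_sum [RHS]big_mkcond.
  by apply: eq_bigr => i _; rewrite inE; case: (_ == _).
under eq_bigr => i _ do rewrite (orient_sign_aligned _ b) -/(light e i).
rewrite -mulr_suml -mulr_sumr sumrB -mulr_sumr count_aligned sumr_const card_ord.
rewrite -mulr_natr natrB // natrD.
by field.
Qed.

Lemma G2_balancedE (V : finType) (end1 end2 : E -> V) (o2 : G2edge c l -> bool) :
  balanced_orientation (G2end end1) (G2end end2) (@G2weight E c l) o2 <->
  forall v, net_inflow end1 end2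
    (fun e => orient_sign (o2 (heavy e)) * (l e + aligned_light o2 e)%:R) v = 0.
Proof.
rewrite balanced_orientationE.
have net_inflow_G2 v :
    net_inflow (G2end end1) (G2end end2) (fun a => orient_sign (o2 a) * G2weight a) v =
    net_inflow end1 end2
      (fun e => orient_sign (o2 (heavy e)) * (l e + aligned_light o2 e)%:R) v.
  by rewrite net_inflow_sigma; apply: eq_net_inflow => e; apply: G2weight_signed_sum.
by split=> bal v; rewrite ?net_inflow_G2 // -net_inflow_G2.
Qed.

Definition G2_orientation (o : E -> bool) (f : E -> nat) (a : G2edge c l) : bool :=
  match tagged a with
  | None => o (tag a)
  | Some i => (i < f (tag a) - l (tag a))%N == o (tag a)
  end.

Lemma aligned_light_G2_orientation (o : E -> bool) (f : E -> nat) (e : E) :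
  (f e <= c e)%N -> aligned_light (G2_orientation o f) e = (f e - l e)%N.
Proof.
move=> le_fc; rewrite -(@card_ord_lt (c e - l e) (f e - l e)); last by apply: leq_sub2r.
apply: eq_card => i; rewrite !inE /G2_orientation /=.
by case: (i < f e - l e)%N; case: (o e).
Qed.

End SplitGraph.

Arguments heavy {E c l} e.

Local Close Scope ring_scope.

Theorem mainTheorem5 (V E : finType) (end1 end2 : E -> V)
  (c l : E -> nat)
  (hc : forall e, 0 < c e) (hl : forall e, l e <= c e) :
  (exists (o : E -> bool) (f : E -> nat),
      is_circulation end1 end2 o f /\ (forall e, l e <= f e <= c e))
  <->
  (exists o2 : G2edge c l -> bool,
      balanced_orientation (G2end end1) (G2end end2) (@G2weight E c l) o2).
Proof.
split=> [[o [f [circ f_bounds]]] | [o2 bal]].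
- exists (G2_orientation o f); apply/G2_balancedE => // v.
  move/is_circulation_balanced/balanced_orientationE: circ => /(_ v) <-.
  apply: eq_net_inflow => e; have /andP [le_lf le_fc] := f_bounds e.
  by rewrite aligned_light_G2_orientation // subnKC.
- exists (fun e => o2 (heavy e)), (fun e => l e + aligned_light o2 e); split.
  + by apply/is_circulation_balanced/balanced_orientationE/G2_balancedE.
  + by move=> e; rewrite leq_addr /= -leq_subRL ?aligned_light_le.
Qed.
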